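(* Let $A$ and $B$ be nontrivial commutative groups. (a) The $\mathbb{Z}[A]$-submodule of $B^A$ generated by $\{\delta_{0,b}: b\in B\}$ is the set of all $f\in B^A$ with $f(a)=0$ for all but finitely many $a\in A$. Hence this set generates $B^A$ as a $\mathbb{Z}[A]$-module if and only if $A$ is finite. (b) If $A$ is finite and $B=\mathbb{Z}/n\mathbb{Z}$ for some $n\ge2$, then the $(\mathbb{Z}/n\mathbb{Z})[A]$-module $B^A$ is free of rank $1$, generated by $\delta_{a,u}$ for any $a\in A$ and any unit $u\in(\mathbb{Z}/n\mathbb{Z})^\times$. (c) If $A$ is finite and $B$ has finite exponent, then for every $a\in A$ and every $b\in B$ of order $\exp(B)$ we have $\delta(A,B)=\operatorname{fdeg}(\delta_{a,b})$.
   Context: For commutative groups $A,B$, $B^A$ denotes the commutative group (under pointwise addition) of all maps $A\to B$. It is a $\mathbb{Z}[A]$-module via $(\sum_a n_a[a])f=\sum_a n_a\tau_a f$, where $(\tau_a f)(x)=f(x+a)$; when $B$ has finite exponent $n$ this is a $(\mathbb{Z}/n\mathbb{Z})[A]$-module. For $a\in A$, $\Delta_a f=\tau_af-f$. Let $\widetilde{\mathbb N}=\mathbb N\cup\{-\infty,\infty\}$, totally ordered with $-\infty$ least and $\infty$ greatest. The functional degree $\operatorname{fdeg}(f)$ of $f\in B^A$ is: $-\infty$ if $f=0$; otherwise the least $n\in\mathbb N$ such that $\Delta_{a_1}\cdots\Delta_{a_{n+1}}f=0$ for all $a_1,\dots,a_{n+1}\in A$; and $\infty$ if no such $n$ exists.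 $\delta(A,B)=\sup\{\operatorname{fdeg}(f): f\in B^A\}$. For $a\in A$, $b\in B$, $\delta_{a,b}\in B^A$ is given by $\delta_{a,b}(a)=b$ and $\delta_{a,b}(x)=0$ for $x\neq a$. *)

From HB Require Import structures.
From mathcomp Require Import all_boot all_order all_algebra.
From Stdlib Require Import ClassicalEpsilon.
Set Implicit Arguments. Unset Strict Implicit. Unset Printing Implicit Defensive.
Import GRing.Theory.
Local Open Scope ring_scope.

Definition nontrivial (G : zmodType) : Prop := exists x : G, x != 0.

Definition finite_type (T : eqType) : Prop := exists s : seq T, forall x, x \in s.

Definition delta (A B : zmodType) (a : A) (b : B) : A -> B :=
  fun x => if x == a then b else 0.

Definition tau (A B : zmodType) (a : A) (f : A -> B) : A -> B := fun x => f (x + a).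
Definition Delta (A B : zmodType) (a : A) (f : A -> B) : A -> B :=
  fun x => f (x + a) - f x.

Definition fin_supp (A B : zmodType) (f : A -> B) : Prop :=
  exists s : seq A, forall x, x \notin s -> f x = 0.

(* Elements of the group ring Z[A] are represented as formal sums
   sum_a n_a [a], i.e. lists of pairs (n_a, a); the action on B^A is
   (sum n_a [a]) f = sum n_a tau_a f. *)
Definition ZA_act (A B : zmodType) (r : seq (int * A)) (f : A -> B) : A -> B :=
  fun x => \sum_(p <- r) (tau p.2 f x) *~ p.1.

Definition ZA_span (A B : zmodType) (S : (A -> B) -> Prop) (f : A -> B) : Prop :=
  exists (k : nat) (r : 'I_k -> seq (int * A)) (g : 'I_k -> (A -> B)),
    (forall i, S (g i)) /\ (forall x, f x = \sum_(i < k) ZA_act (r i) (g i) x).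

Definition ZnA_act (A : finZmodType) (n : nat) (r : {ffun A -> 'Z_n})
    (f : A -> 'Z_n) : A -> 'Z_n :=
  fun x => \sum_(a : A) r a * tau a f x.

Inductive enat := NegInf | Fin of nat | PosInf.

Definition enat_le (x y : enat) : Prop :=
  match x, y with
  | NegInf, _ => True
  | _, PosInf => True
  | Fin m, Fin n => (m <= n)%N
  | _, _ => False
  end.

Definition iterDelta (A B : zmodType) (s : seq A) (f : A -> B) : A -> B :=
  foldr (fun a g => Delta a g) f s.

Definition vanishes (A B : zmodType) (n : nat) (f : A -> B) : Prop :=
  forall s : seq A, size s = n.+1 -> forall x, iterDelta s f x = 0.

Definition fdeg_spec (A B : zmodType) (f : A -> B) (d : enat) : Prop :=
  match d with
  | NegInf => forall x, f x = 0
  | Fin n => (exists x, f x <> 0) /\ vanishes n f /\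
             (forall m, vanishes m f -> (n <= m)%N)
  | PosInf => (exists x, f x <> 0) /\ (forall n, ~ vanishes n f)
  end.

(* fdeg f: the unique d satisfying the specification (which always exists). *)
Definition fdeg (A B : zmodType) (f : A -> B) : enat :=
  epsilon (inhabits NegInf) (fdeg_spec f).

Definition is_lub_enat (S : enat -> Prop) (d : enat) : Prop :=
  (forall e, S e -> enat_le e d) /\
  (forall d', (forall e, S e -> enat_le e d') -> enat_le d d').

(* delta(A,B) = sup { fdeg f : f in B^A } (the sup exists in N ~). *)
Definition deltaAB (A B : zmodType) : enat :=
  epsilon (inhabits NegInf)
    (is_lub_enat (fun e => exists f : A -> B, fdeg f = e)).

Definition has_order (B : zmodType) (b : B) (m : nat) : Prop :=
  (0 < m)%N /\ b *+ m = 0 /\ (forall k, (0 < k)%N -> b *+ k = 0 -> (m <= k)%N).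

Definition is_exponent (B : zmodType) (e : nat) : Prop :=
  (0 < e)%N /\ (forall b : B, b *+ e = 0) /\
  (forall k, (0 < k)%N -> (forall b : B, b *+ k = 0) -> (e <= k)%N).

(* (a) A finitely supported [f] is the sum of the [delta y (f y)] over its
   support, and [delta y b] is the translate of [delta 0 b] by [-y];
   conversely every element of the span vanishes off the finitely many
   translation points.  A nonzero constant map has finite support only if
   [A] is finite.
   (b) [r (delta a u) x = r (a - x) * u], which determines [r] and reaches
   every map when [u] is a unit.
   (c) Iterated differences are convolutions with an integer kernel:
   [Delta_s f x = sum_y diff_kernel s (x - y) f y], and in particular
   [Delta_s (delta a b) x = diff_kernel s (x - a) b].  If [Delta_s] kills
   [delta a b] with [b] of order [exp B], then [exp B] divides every value of
   the kernel, so [Delta_s] kills every [f]: [fdeg (delta a b)] bounds every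
   functional degree. *)
From HB Require Import structures.
From mathcomp Require Import all_boot all_order all_algebra.
From Stdlib Require Import ClassicalEpsilon Classical.
Set Implicit Arguments. Unset Strict Implicit. Unset Printing Implicit Defensive.
Import GRing.Theory.
Local Open Scope ring_scope.

Definition delta0_maps (A B : zmodType) : (A -> B) -> Prop :=
  fun g => exists b : B, g = delta 0 b.

Lemma tau_delta (A B : zmodType) (c a : A) (b : B) x :
  tau c (delta a b) x = delta (a - c) b x.
Proof. by rewrite /tau /delta (can2_eq (addrK c) (subrK c)). Qed.

Lemma ZA_span_delta0_fin_supp (A B : zmodType) (f : A -> B) :
  ZA_span (@delta0_maps A B) f -> fin_supp f.
Proof.
move=> [k [r [g [gS f_eq]]]].
exists (flatten [seq [seq - p.2 | p <- r i] | i <- enum 'I_k]) => x x_out.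
rewrite f_eq big1 // => i _; have [b ->] := gS i.
rewrite /ZA_act big1_seq // => p /andP[_ p_in].
rewrite tau_delta /delta sub0r.
case: eqP => [x_eq|_]; last by rewrite mul0rz.
case/negP: x_out; apply/flattenP; exists [seq - p.2 | p <- r i].
  by apply/mapP; exists i; rewrite ?mem_enum.
by rewrite x_eq (map_f (fun q : int * A => - q.2)).
Qed.

Lemma fin_supp_sum_delta (A B : zmodType) (s : seq A) (f : A -> B) x :
  uniq s -> (forall y, y \notin s -> f y = 0) ->
  f x = \sum_(y <- s) delta y (f y) x.
Proof.
move=> s_uniq f_supp; have [x_in|x_out] := boolP (x \in s).
  rewrite (bigD1_seq x) //= /delta eqxx big1 ?addr0 // => y y_neq.
  by rewrite eq_sym (negbTE y_neq).
rewrite f_supp // big1_seq // => y /andP[_ y_in]; rewrite /delta.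
by case: eqP => // x_eq; rewrite x_eq y_in in x_out.
Qed.

Lemma fin_supp_ZA_span_delta0 (A B : zmodType) (f : A -> B) :
  fin_supp f -> ZA_span (@delta0_maps A B) f.
Proof.
move=> [s f_supp]; set t := undup s.
exists (size t), (fun i => [:: (1%:Z, - nth 0 t i)]),
  (fun i => delta 0 (f (nth 0 t i))).
split=> [i|x]; first by eexists.
rewrite (fin_supp_sum_delta x (undup_uniq s)) => [|y]; last first.
  by rewrite mem_undup; apply: f_supp.
rewrite (big_nth 0) big_mkord; apply: eq_bigr => i _.
by rewrite /ZA_act big_seq1 tau_delta sub0r opprK.
Qed.

Lemma ZA_span_delta0E (A B : zmodType) (f : A -> B) :
  ZA_span (@delta0_maps A B) f <-> fin_supp f.
Proof. by split; [apply: ZA_span_delta0_fin_supp | apply: fin_supp_ZA_span_delta0]. Qed.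

Lemma finite_type_fin_supp (A B : zmodType) (f : A -> B) :
  finite_type A -> fin_supp f.
Proof. by move=> [s s_full]; exists s => x; rewrite s_full. Qed.

Lemma fin_supp_cst_finite_type (A B : zmodType) (b : B) :
  b != 0 -> fin_supp (fun _ : A => b) -> finite_type A.
Proof.
move=> b_neq0 [s s_supp]; exists s => x.
by apply: contraNT b_neq0 => /s_supp ->.
Qed.

Lemma ZnA_act_delta (A : finZmodType) n (r : {ffun A -> 'Z_n}) a u x :
  ZnA_act r (delta a u) x = r (a - x) * u.
Proof.
rewrite /ZnA_act (bigD1 (a - x)) //= big1 => [|c c_neq].
  by rewrite tau_delta /delta subKr eqxx addr0.
rewrite tau_delta /delta eq_sym (can2_eq (subKr a) (subKr a)).
by rewrite (negbTE c_neq) mulr0.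
Qed.

Lemma ZnA_act_delta_unit_onto (A : finZmodType) n (a : A) (u : 'Z_n)
    (f : A -> 'Z_n) :
  u \is a GRing.unit -> exists r, forall x, ZnA_act r (delta a u) x = f x.
Proof.
move=> u_unit; exists [ffun c => f (a - c) * u^-1] => x.
by rewrite ZnA_act_delta ffunE divrK // subKr.
Qed.

Lemma ZnA_act_delta_unit_inj (A : finZmodType) n (a : A) (u : 'Z_n)
    (r1 r2 : {ffun A -> 'Z_n}) :
  u \is a GRing.unit ->
  (forall x, ZnA_act r1 (delta a u) x = ZnA_act r2 (delta a u) x) -> r1 = r2.
Proof.
move=> u_unit r12; apply/ffunP => c; have := r12 (a - c).
by rewrite !ZnA_act_delta subKr; apply: (mulIr u_unit).
Qed.

Definition diff_kernel (A : zmodType) (s : seq A) : A -> int :=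
  iterDelta s (delta 0 1).

Lemma iterDelta_delta (A B : zmodType) (s : seq A) (a : A) (b : B) x :
  iterDelta s (delta a b) x = b *~ diff_kernel s (x - a).
Proof.
elim: s x => [|t s IHs] x /=.
  by rewrite /delta subr_eq0; case: eqP.
by rewrite /Delta !IHs -mulrzBr /diff_kernel /= /Delta addrAC.
Qed.

Lemma iterDelta_convolution (A : finZmodType) (B : zmodType) (s : seq A)
    (f : A -> B) x :
  iterDelta s f x = \sum_(y : A) f y *~ diff_kernel s (x - y).
Proof.
elim: s x => [|t s IHs] x /=.
  rewrite (fin_supp_sum_delta x (enum_uniq A)) => [|y]; last by rewrite mem_enum.
  by rewrite /index_enum -enumT; apply: eq_bigr => y _; rewrite -(iterDelta_delta [::]).
rewrite /Delta !IHs -sumrB; apply: eq_bigr => y _.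
by rewrite -mulrzBr /diff_kernel /= /Delta addrAC.
Qed.

Lemma mulrz_eq0_mulrn (B : zmodType) (c : B) (k : int) :
  (c *~ k == 0) = (c *+ `|k|%N == 0).
Proof. by case: k => n //; rewrite NegzE mulrNz oppr_eq0. Qed.

Lemma has_order_dvdn (B : zmodType) (b : B) e m :
  has_order b e -> b *+ m = 0 -> (e %| m)%N.
Proof.
move=> [e_gt0 [be_eq0 e_min]] bm_eq0; apply/eqP.
have [//|mod_gt0] := posnP (m %% e)%N.
have bmod_eq0 : b *+ (m %% e) = 0.
  by move: bm_eq0; rewrite {1}(divn_eq m e) mulrnDr mulnC mulrnA be_eq0 mul0rn add0r.
by have := e_min _ mod_gt0 bmod_eq0; rewrite leqNgt ltn_pmod.
Qed.

Lemma is_exponent_mulrn_eq0 (B : zmodType) e (c : B) m :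
  is_exponent B e -> (e %| m)%N -> c *+ m = 0.
Proof. by move=> [_ [ce_eq0 _]] /dvdnP[q ->]; rewrite mulnC mulrnA ce_eq0 mul0rn. Qed.

Lemma has_order_neq0 (B : zmodType) e (b : B) :
  nontrivial B -> is_exponent B e -> has_order b e -> b != 0.
Proof.
move=> [c c_neq0] [_ [ce_eq0 _]] [e_gt0 [_ e_min]]; apply: contraNneq c_neq0 => b_eq0.
have e_eq1 : e = 1%N by apply/eqP; rewrite eqn_leq e_min // b_eq0 mul0rn.
by rewrite -(ce_eq0 c) e_eq1.
Qed.

Lemma vanishes_delta_vanishes (A : finZmodType) (B : zmodType) e (a : A) (b : B)
    n (f : A -> B) :
  is_exponent B e -> has_order b e -> vanishes n (delta a b) -> vanishes n f.
Proof.
move=> expB ord_b delta_van s s_size x.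
rewrite iterDelta_convolution big1 // => y _.
apply/eqP; rewrite mulrz_eq0_mulrn; apply/eqP/(is_exponent_mulrn_eq0 _ expB).
apply: (has_order_dvdn ord_b); apply/eqP; rewrite -mulrz_eq0_mulrn.
by have := delta_van s s_size (x - y + a); rewrite iterDelta_delta addrK => ->.
Qed.

Lemma ex_least_nat (P : nat -> Prop) :
  (exists n, P n) -> exists2 m, P m & forall k, P k -> (m <= k)%N.
Proof.
move=> [n Pn]; pose p k := if excluded_middle_informative (P k) then true else false.
have pP k : reflect (P k) (p k).
  by rewrite /p; case: excluded_middle_informative => ?; constructor.
have ex_p : exists k, p k by exists n; apply/pP.
by case: (ex_minnP ex_p) => m /pP Pm m_min; exists m => // k /pP /m_min.
Qed.

Lemma fdeg_specP (A B : zmodType) (f : A -> B) : fdeg_spec f (fdeg f).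
Proof.
apply: epsilon_spec.
have [f_eq0|/not_all_ex_not f_neq0] := classic (forall x, f x = 0).
  by exists NegInf.
have [/ex_least_nat[m f_van m_min]|f_nvan] := classic (exists n, vanishes n f).
  by exists (Fin m).
by exists PosInf; split=> // n f_van; apply: f_nvan; exists n.
Qed.

Lemma fdeg_le_vanishes (A B : zmodType) (f g : A -> B) :
  (exists x, g x <> 0) -> (forall n, vanishes n g -> vanishes n f) ->
  enat_le (fdeg f) (fdeg g).
Proof.
move=> [x gx_neq0] van_gf; have := fdeg_specP f; have := fdeg_specP g.
case: (fdeg g) => [/(_ x)//|n [_ [g_van _]]|_]; last by case: (fdeg f).
case: (fdeg f) => // [m [_ [_ m_min]]|[_ f_nvan]].
  exact/m_min/van_gf.
by case: (f_nvan n); apply: van_gf.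
Qed.

Lemma enat_le_anti (x y : enat) : enat_le x y -> enat_le y x -> x = y.
Proof. by case: x; case: y => //= m n mn nm; congr Fin; apply/eqP; rewrite eqn_leq mn. Qed.

Lemma deltaAB_max (A B : zmodType) (g : A -> B) :
  (forall f : A -> B, enat_le (fdeg f) (fdeg g)) -> deltaAB A B = fdeg g.
Proof.
move=> g_max.
have g_lub : is_lub_enat (fun d => exists f : A -> B, fdeg f = d) (fdeg g).
  by split=> [_ [f <-] //|d d_ub]; apply: d_ub; exists g.
have [ub lub] := epsilon_spec (inhabits NegInf) _ (ex_intro _ _ g_lub).
by apply: enat_le_anti; [exact: lub g_lub.1 | exact: g_lub.2 _ ub].
Qed.

Lemma deltaAB_delta (A : finZmodType) (B : zmodType) e (a : A) (b : B) :
  nontrivial B -> is_exponent B e -> has_order b e ->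
  deltaAB A B = fdeg (delta a b).
Proof.
move=> B_nontriv expB ord_b; apply: deltaAB_max => f; apply: fdeg_le_vanishes.
  exists a; rewrite /delta eqxx; apply/eqP; exact: has_order_neq0 ord_b.
by move=> n; apply: vanishes_delta_vanishes expB ord_b.
Qed.

Theorem mainTheorem7 :
  (* (a) *)
  (forall (A B : zmodType), nontrivial A -> nontrivial B ->
     (forall f : A -> B,
        ZA_span (fun g => exists b : B, g = delta 0 b) f <-> fin_supp f) /\
     ((forall f : A -> B, ZA_span (fun g => exists b : B, g = delta 0 b) f)
        <-> finite_type A)) /\
  (* (b) *)
  (forall (A : finZmodType) (n : nat), nontrivial A -> (1 < n)%N ->
     forall (a : A) (u : 'Z_n), u \is a GRing.unit ->
       (forall f : A -> 'Z_n, exists r : {ffun A -> 'Z_n},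
          forall x, ZnA_act r (delta a u) x = f x) /\
       (forall r1 r2 : {ffun A -> 'Z_n},
          (forall x, ZnA_act r1 (delta a u) x = ZnA_act r2 (delta a u) x) ->
          r1 = r2)) /\
  (* (c) *)
  (forall (A : finZmodType) (B : zmodType) (e : nat),
     nontrivial A -> nontrivial B -> is_exponent B e ->
     forall (a : A) (b : B), has_order b e ->
       deltaAB A B = fdeg (delta a b)).
Proof.
split; [|split].
- move=> A B _ [b b_neq0]; split=> [f|]; first exact: ZA_span_delta0E.
  split=> [span_all|A_fin f]; last exact/ZA_span_delta0E/finite_type_fin_supp.
  by apply: (fin_supp_cst_finite_type b_neq0); apply/ZA_span_delta0E/span_all.
- move=> A n _ _ a u u_unit; split=> [f|r1 r2].
    exact: ZnA_act_delta_unit_onto.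
  exact: ZnA_act_delta_unit_inj.
- by move=> A B e _ B_nontriv expB a b ord_b; apply: deltaAB_delta ord_b.
Qed.
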